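(* Let $1\le k\le n-1$ and let $\Sigma=\mathbb{S}^k\times\mathbb{R}^{n-k}\subset\mathbb{R}^{n+1}$ be a self-shrinker, with Euclidean coordinates $\vec x=(x_{k+1},\dots,x_n)$ on the $\mathbb{R}^{n-k}$ factor (and $x_n$ any one of these linear coordinates). Then the following subsets of $\Sigma$ are stable: (1) $\{x_n>\sqrt2\}$; (2) $\{|x_n|<\sqrt2\}$; (3) $\{x_n<-\sqrt2\}$; (4) $\{|\vec x|>\sqrt{2(n-k)}\}$; (5) $\{|\vec x|<\sqrt{2(n-k)}\}$.
   Context: $\mathbb{S}^k$ is the round sphere of radius $\sqrt{2k}$ centered at the origin of $\mathbb{R}^{k+1}$. Stability operator: $Lf=\Delta f-\tfrac12\langle\vec x,\nabla f\rangle+(|A|^2+\tfrac12)f$. A region $\Omega$ is stable if there is a function $u$ with $Lu=0$ and $u>0$ on $\Omega$. *)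

From Stdlib Require Import Reals.
Open Scope R_scope.

(* Points of R^(N+1) are represented as functions nat -> R; only the
   coordinates 0..N are meaningful. *)
Definition vec := nat -> R.

Fixpoint ssum (m : nat) (f : nat -> R) : R :=
  match m with
  | O => 0
  | S m' => ssum m' f + f m'
  end.

Definition sumrange (a b : nat) (f : nat -> R) : R :=
  ssum (b - a) (fun i => f (a + i)%nat).

Definition shift (p : vec) (i : nat) (t : R) : vec :=
  fun m => if Nat.eqb m i then p m + t else p m.

Definition near (N : nat) (p : vec) (del : R) (q : vec) : Prop :=
  (forall i, (N < i)%nat -> q i = p i) /\
  ssum (S N) (fun i => (q i - p i) ^ 2) < del ^ 2.

Definition cont_at (N : nat) (f : vec -> R) (p : vec) : Prop :=
  forall eps, 0 < eps -> exists del, 0 < del /\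
    forall q, near N p del q -> Rabs (f q - f p) < eps.

(* The self-shrinker Sigma = S^k x R^(n-k) in R^(n+1):
   coordinates x_0..x_k on the R^(k+1) factor, where S^k is the round sphere
   of radius sqrt(2k); coordinates x_(k+1)..x_n on the R^(n-k) factor. *)
Definition radius (k : nat) : R := sqrt (2 * INR k).

Definition Sigma (k n : nat) (p : vec) : Prop :=
  ssum (S k) (fun i => p i ^ 2) = radius k ^ 2 /\
  (forall i, (n < i)%nat -> p i = 0).

(* C^2 data of an ambient function U near a point q of R^(n+1):
   g i = d_i U, h i j = d_j (d_i U), second partials continuous. *)
Definition C2_at (N : nat) (U : vec -> R) (g : nat -> vec -> R)
  (h : nat -> nat -> vec -> R) (q : vec) : Prop :=
  (forall i, (i <= N)%nat ->
     derivable_pt_lim (fun t => U (shift q i t)) 0 (g i q)) /\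
  (forall i j, (i <= N)%nat -> (j <= N)%nat ->
     derivable_pt_lim (fun t => g i (shift q j t)) 0 (h i j q)) /\
  (forall i j, (i <= N)%nat -> (j <= N)%nat -> cont_at N (h i j) q).

(* Stability operator L u = Delta u - 1/2 <x, grad u> + (|A|^2 + 1/2) u on Sigma,
   where u is the restriction to Sigma of an ambient C^2 function U with
   partials g, h.  Formulas used (standard for a hypersurface with unit
   normal nu and mean curvature H = div nu):
     Delta_Sigma u = Delta_{R^(n+1)} U - Hess U (nu,nu) - H <grad U, nu>,
     grad_Sigma u  = grad U - <grad U, nu> nu,
   with nu = (x_0..x_k,0..0)/sqrt(2k) the outward normal of the cylinder,
   H = k / sqrt(2k), and |A|^2 = k / (sqrt(2k))^2 (principal curvatures
   1/sqrt(2k) with multiplicity k, and 0). *)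
Definition nu (k : nat) (p : vec) (i : nat) : R := p i / radius k.

Definition meanH (k : nat) : R := INR k / radius k.

Definition normA2 (k : nat) : R := INR k / (radius k ^ 2).

Definition lap_Sigma (k n : nat) (g : nat -> vec -> R)
  (h : nat -> nat -> vec -> R) (p : vec) : R :=
  ssum (S n) (fun i => h i i p)
  - ssum (S k) (fun i => ssum (S k) (fun j => nu k p i * nu k p j * h i j p))
  - meanH k * ssum (S k) (fun i => nu k p i * g i p).

Definition drift_Sigma (k n : nat) (g : nat -> vec -> R) (p : vec) : R :=
  ssum (S n) (fun i => p i * g i p)
  - ssum (S k) (fun i => p i * nu k p i) * ssum (S k) (fun i => nu k p i * g i p).

Definition Lop (k n : nat) (U : vec -> R) (g : nat -> vec -> R)
  (h : nat -> nat -> vec -> R) (p : vec) : R :=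
  lap_Sigma k n g h p - / 2 * drift_Sigma k n g p + (normA2 k + / 2) * U p.

(* A region Omega (a subset of Sigma) is stable if there is a C^2 function u
   on Omega (given as the restriction of an ambient function that is C^2 on a
   neighbourhood of each point of Omega) with L u = 0 and u > 0 on Omega. *)
Definition stable (k n : nat) (Omega : vec -> Prop) : Prop :=
  exists (U : vec -> R) (g : nat -> vec -> R) (h : nat -> nat -> vec -> R),
    forall p, Omega p ->
      (exists del, 0 < del /\ forall q, near n p del q -> C2_at n U g h q) /\
      Lop k n U g h p = 0 /\ 0 < U p.

Definition ynorm2 (k n : nat) (p : vec) : R :=
  sumrange (S k) (S n) (fun i => p i ^ 2).

(* For weights w_0..w_n vanishing on the sphere coordinates
   0..k, put Q_w(x) = sum_i w_i x_i^2 and u = Q_w - 2 sum_i w_i.  Such a u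
   does not see the sphere factor, so on Sigma the Laplacian and the drift
   reduce to flat ones: Delta u = 2 sum_i w_i and <x, grad u> = 2 Q_w, while
   |A|^2 + 1/2 = 1.  Hence L u = 2 sum w - Q_w + u = 0, and so does L(-u).
   A region is therefore stable as soon as u or -u is positive on it.

   Two
   choices of weights give the theorem: the indicator of a coordinate j
   (u = x_j^2 - 2, for regions (1)-(3)) and the indicator of the whole flat
   factor (u = |y|^2 - 2(n-k), for regions (4)-(5)). *)

From Stdlib Require Import Reals Lra Lia FunctionalExtensionality.
From Coquelicot Require Import Coquelicot.
Open Scope R_scope.

Lemma ssum_ext m f g :
  (forall i, (i < m)%nat -> f i = g i) -> ssum m f = ssum m g.
Proof.
  induction m as [|m IH]; simpl; intros Hfg; auto.
  rewrite IH by (intros; apply Hfg; lia). rewrite Hfg by lia. reflexivity.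
Qed.

Lemma ssum_zero m f : (forall i, (i < m)%nat -> f i = 0) -> ssum m f = 0.
Proof.
  induction m as [|m IH]; simpl; intros Hf; auto.
  rewrite IH by (intros; apply Hf; lia). rewrite Hf by lia. lra.
Qed.

Lemma ssum_scal m c f : ssum m (fun i => c * f i) = c * ssum m f.
Proof. induction m as [|m IH]; simpl; [lra|]. rewrite IH. lra. Qed.

Lemma ssum_const m : ssum m (fun _ => 1) = INR m.
Proof. induction m as [|m IH]; simpl; auto. rewrite IH. destruct m; simpl; lra. Qed.

Lemma ssum_add a b f :
  ssum (a + b) f = ssum a f + ssum b (fun i => f (a + i)%nat).
Proof.
  induction b as [|b IH]; [rewrite Nat.add_0_r; simpl; lra|].
  rewrite Nat.add_succ_r. simpl. rewrite IH. lra.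
Qed.

Lemma ssum_indicator m j (a : R) :
  ssum m (fun i => if Nat.eqb i j then a else 0) = if Nat.ltb j m then a else 0.
Proof.
  induction m as [|m IH]; simpl; [destruct j; simpl; lra|]. rewrite IH.
  destruct (Nat.eqb_spec m j), (Nat.ltb_spec j m), (Nat.ltb_spec j (S m));
    try lia; lra.
Qed.

Lemma ssum_shift m i t (F : nat -> R -> R) q :
  ssum m (fun l => F l (shift q i t l)) =
  ssum m (fun l => F l (q l)) +
  (if Nat.ltb i m then F i (q i + t) - F i (q i) else 0).
Proof.
  induction m as [|m IH]; simpl; [lra|]. rewrite IH. unfold shift.
  destruct (Nat.eqb_spec m i) as [->|Hmi].
  - rewrite Nat.ltb_irrefl.
    replace (Nat.ltb i (S i)) with true by (symmetry; apply Nat.ltb_lt; lia). lra.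
  - destruct (Nat.ltb_spec i m), (Nat.ltb_spec i (S m)); try lia; lra.
Qed.

Lemma normA2_half k : (1 <= k)%nat -> normA2 k = / 2.
Proof.
  intros Hk. unfold normA2, radius.
  assert (0 < INR k) by (apply lt_0_INR; lia).
  rewrite pow2_sqrt by lra. field. lra.
Qed.

Definition quad_form (w : nat -> R) (n : nat) (p : vec) : R :=
  ssum (S n) (fun i => w i * p i ^ 2).

Definition flat_quadratic (w : nat -> R) (n : nat) (s : R) (p : vec) : R :=
  s * (quad_form w n p - 2 * ssum (S n) w).

Definition flat_quadratic_grad (w : nat -> R) (s : R) (i : nat) (q : vec) : R :=
  s * (w i * (2 * q i)).

Definition flat_quadratic_hess (w : nat -> R) (s : R) (i i' : nat) (q : vec) : R :=
  if Nat.eqb i i' then s * (w i * 2) else 0.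

Lemma flat_quadratic_C2 w n s q :
  C2_at n (flat_quadratic w n s) (flat_quadratic_grad w s)
    (flat_quadratic_hess w s) q.
Proof.
  split; [|split].
  - intros i Hi. apply is_derive_Reals.
    assert (Hline : (fun t => flat_quadratic w n s (shift q i t)) =
      fun t => s * (quad_form w n q + w i * ((q i + t) ^ 2 - q i ^ 2)
                    - 2 * ssum (S n) w)).
    { apply functional_extensionality; intro t.
      unfold flat_quadratic, quad_form.
      rewrite (ssum_shift (S n) i t (fun l x => w l * x ^ 2)).
      replace (Nat.ltb i (S n)) with true by (symmetry; apply Nat.ltb_lt; lia).
      f_equal. lra. }
    rewrite Hline. unfold flat_quadratic_grad. auto_derive; auto. lra.
  - intros i i' _ _. apply is_derive_Reals.
    unfold flat_quadratic_grad, flat_quadratic_hess, shift.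
    destruct (Nat.eqb i i'); auto_derive; auto; lra.
  - intros i i' _ _ eps Heps. exists 1. split; [lra|]. intros.
    rewrite Rminus_diag, Rabs_R0. exact Heps.
Qed.

Lemma flat_quadratic_jacobi k n w s p :
  (1 <= k)%nat -> (forall i, (i <= k)%nat -> w i = 0) ->
  Lop k n (flat_quadratic w n s) (flat_quadratic_grad w s)
    (flat_quadratic_hess w s) p = 0.
Proof.
  intros Hk Hw.
  unfold Lop, lap_Sigma, drift_Sigma, flat_quadratic_grad, flat_quadratic_hess.
  rewrite normA2_half by exact Hk.
  assert (Hnormal_hess :
    ssum (S k) (fun i => ssum (S k) (fun i' =>
      nu k p i * nu k p i' * (if Nat.eqb i i' then s * (w i * 2) else 0))) = 0).
  { apply ssum_zero; intros i Hi. apply ssum_zero; intros i' _.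
    destruct (Nat.eqb i i'); [rewrite Hw by lia|]; lra. }
  assert (Hnormal_grad :
    ssum (S k) (fun i => nu k p i * (s * (w i * (2 * p i)))) = 0).
  { apply ssum_zero; intros i Hi. rewrite Hw by lia. lra. }
  assert (Htrace :
    ssum (S n) (fun i => if Nat.eqb i i then s * (w i * 2) else 0)
    = (2 * s) * ssum (S n) w).
  { rewrite <- ssum_scal. apply ssum_ext; intros. rewrite Nat.eqb_refl. lra. }
  assert (Hradial :
    ssum (S n) (fun i => p i * (s * (w i * (2 * p i))))
    = (2 * s) * quad_form w n p).
  { unfold quad_form. rewrite <- ssum_scal. apply ssum_ext; intros. lra. }
  rewrite Hnormal_hess, Hnormal_grad, Htrace, Hradial.
  unfold flat_quadratic. lra.
Qed.

Lemma stable_of_positive_flat_quadratic k n w s (Omega : vec -> Prop) :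
  (1 <= k)%nat -> (forall i, (i <= k)%nat -> w i = 0) ->
  (forall p, Omega p -> 0 < flat_quadratic w n s p) ->
  stable k n Omega.
Proof.
  intros Hk Hw Hpos.
  exists (flat_quadratic w n s), (flat_quadratic_grad w s),
         (flat_quadratic_hess w s).
  intros p Hp. split; [|split].
  - exists 1. split; [lra|]. intros q _. apply flat_quadratic_C2.
  - apply flat_quadratic_jacobi; assumption.
  - apply Hpos, Hp.
Qed.

Definition coord_weight (j : nat) (i : nat) : R := if Nat.eqb i j then 1 else 0.

Lemma coord_weight_flat k j : (k < j)%nat ->
  forall i, (i <= k)%nat -> coord_weight j i = 0.
Proof. intros Hkj i Hi. unfold coord_weight. destruct (Nat.eqb_spec i j); [lia|auto]. Qed.

Lemma flat_quadratic_coord n j s p : (j <= n)%nat ->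
  flat_quadratic (coord_weight j) n s p = s * (p j ^ 2 - 2).
Proof.
  intros Hjn. unfold flat_quadratic, quad_form, coord_weight.
  rewrite (ssum_ext (S n) _ (fun i => if Nat.eqb i j then p j ^ 2 else 0)).
  2:{ intros i _. destruct (Nat.eqb_spec i j); [subst|]; lra. }
  rewrite !ssum_indicator. destruct (Nat.ltb_spec j (S n)); [lra|lia].
Qed.

Definition factor_weight (k : nat) (i : nat) : R := if Nat.ltb k i then 1 else 0.

Lemma factor_weight_flat k : forall i, (i <= k)%nat -> factor_weight k i = 0.
Proof. intros i Hi. unfold factor_weight. destruct (Nat.ltb_spec k i); [lia|auto]. Qed.

Lemma flat_quadratic_factor k n s p : (k <= n)%nat ->
  flat_quadratic (factor_weight k) n s p = s * (ynorm2 k n p - 2 * INR (n - k)).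
Proof.
  intros Hkn. unfold flat_quadratic, quad_form, ynorm2, sumrange.
  replace (S n - S k)%nat with (n - k)%nat by lia.
  replace (S n) with (S k + (n - k))%nat by lia.
  rewrite !ssum_add.
  rewrite (ssum_zero (S k) (fun i => factor_weight k i * _))
    by (intros; rewrite factor_weight_flat by lia; lra).
  rewrite (ssum_zero (S k) (factor_weight k))
    by (intros; apply factor_weight_flat; lia).
  assert (Hone : forall i, factor_weight k (S k + i) = 1).
  { intros i. unfold factor_weight. destruct (Nat.ltb_spec k (S k + i)); [lra|lia]. }
  rewrite (ssum_ext (n - k) (fun i => factor_weight k (S k + i) * _)
             (fun i => p (S k + i)%nat ^ 2)) by (intros; rewrite Hone; lra).
  rewrite (ssum_ext (n - k) (fun i => factor_weight k (S k + i)) (fun _ => 1))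
    by (intros; apply Hone).
  rewrite ssum_const. lra.
Qed.

Lemma sq_gt_of_abs_gt_sqrt x c : 0 <= c -> sqrt c < Rabs x -> c < x ^ 2.
Proof.
  intros Hc H. rewrite <- (pow2_abs x), <- (pow2_sqrt c) by exact Hc.
  pose proof (sqrt_pos c). nra.
Qed.

Lemma sq_lt_of_abs_lt_sqrt x c : 0 <= c -> Rabs x < sqrt c -> x ^ 2 < c.
Proof.
  intros Hc H. rewrite <- (pow2_abs x), <- (pow2_sqrt c) by exact Hc.
  pose proof (Rabs_pos x). nra.
Qed.

Theorem proposition4p5 :
  forall (k n : nat), (1 <= k)%nat -> (k <= n - 1)%nat ->
  forall (j : nat), (k + 1 <= j)%nat -> (j <= n)%nat ->
    stable k n (fun p => Sigma k n p /\ p j > sqrt 2) /\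
    stable k n (fun p => Sigma k n p /\ Rabs (p j) < sqrt 2) /\
    stable k n (fun p => Sigma k n p /\ p j < - sqrt 2) /\
    stable k n (fun p => Sigma k n p /\ sqrt (ynorm2 k n p) > sqrt (2 * INR (n - k))) /\
    stable k n (fun p => Sigma k n p /\ sqrt (ynorm2 k n p) < sqrt (2 * INR (n - k))).
Proof.
  intros k n Hk Hkn j Hkj Hjn.
  assert (Hwj := coord_weight_flat k j ltac:(lia)).
  assert (Hwk := factor_weight_flat k).
  assert (H2 : 0 <= 2) by lra.
  assert (Hdim : 0 <= 2 * INR (n - k)) by (pose proof (pos_INR (n - k)); lra).
  repeat split.
  -
    apply (stable_of_positive_flat_quadratic k n _ 1 _ Hk Hwj).
    intros p [_ Hp]. rewrite flat_quadratic_coord by exact Hjn.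
    pose proof (sq_gt_of_abs_gt_sqrt (p j) 2 H2 ltac:(unfold Rabs; destruct Rcase_abs; lra)).
    lra.
  -
    apply (stable_of_positive_flat_quadratic k n _ (-1) _ Hk Hwj).
    intros p [_ Hp]. rewrite flat_quadratic_coord by exact Hjn.
    pose proof (sq_lt_of_abs_lt_sqrt (p j) 2 H2 Hp). lra.
  -
    apply (stable_of_positive_flat_quadratic k n _ 1 _ Hk Hwj).
    intros p [_ Hp]. rewrite flat_quadratic_coord by exact Hjn.
    pose proof (sq_gt_of_abs_gt_sqrt (p j) 2 H2 ltac:(unfold Rabs; destruct Rcase_abs; lra)).
    lra.
  -
    apply (stable_of_positive_flat_quadratic k n _ 1 _ Hk Hwk).
    intros p [_ Hp]. rewrite flat_quadratic_factor by lia.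
    pose proof (sqrt_lt_0_alt _ _ Hp). lra.
  -
    apply (stable_of_positive_flat_quadratic k n _ (-1) _ Hk Hwk).
    intros p [_ Hp]. rewrite flat_quadratic_factor by lia.
    pose proof (sqrt_lt_0_alt _ _ Hp). lra.
Qed.
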